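(* A circular net $f:\mathbb Z^2\to\mathbb R^N$ (in general position) is a discrete isothermic net if and only if the function $q(u)=q(f,f_1,f_{12},f_2)$ satisfies, for every $u\in\mathbb Z^2$, $$q\cdot q_{-1,-2}=q_{-1}\cdot q_{-2},$$ where $q_{-1}=q(u-e_1)=q(f_{-1},f,f_2,f_{-1,2})$, $q_{-2}=q(u-e_2)=q(f_{-2},f_{1,-2},f_1,f)$, and $q_{-1,-2}=q(u-e_1-e_2)=q(f_{-1,-2},f_{-2},f,f_{-1})$.
   Context: Notation: for $f:\mathbb Z^m\to\mathbb R^N$, $f=f(u)$, $f_i=f(u+e_i)$, $f_{ij}=f(u+e_i+e_j)$ with $e_i$ the unit vectors; negative indices denote backward shifts, e.g. $f_{-1}=f(u-e_1)$, $f_{1,-2}=f(u+e_1-e_2)$. A Q-net is a map such that each elementary quadrilateral $(f,f_i,f_{ij},f_j)$ ($i\ne j$) is planar, assumed non-degenerate (distinct vertices, no three collinear, diagonals meeting in a point distinct from the vertices). Two planar quadrilaterals $(A,B,C,D)$, $(A^*,B^*,C^*,D^* )$ are dual if $A^*B^*\parallel AB$, $B^*C^*\parallel BC$, $C^*D^*\parallel CD$, $D^*A^*\parallel DA$, $A^*C^*\parallel BD$, $B^*D^*\parallel AC$. A Q-net $f$ is a discrete Koenigs net if there is a Q-net $f^*$ with every $(f^*,f^*_i,f^*_{ij},f^*_j)$ dual to $(f,f_i,f_{ij},f_j)$. A circular net is a Q-net all of whose elementary quadrilaterals have their four vertices on a circle. A discrete isothermic net is a circular net which is a discrete Koenigs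 net. For four concircular points $a,b,c,d\in\mathbb R^N$, their cross-ratio is $q(a,b,c,d)=(a-b)(b-c)^{-1}(c-d)(d-a)^{-1}$, computed after identifying a $2$-plane containing them with $\mathbb C$ (complex multiplication); it is real and independent of the identification (equivalently, computed in the Clifford algebra of $\mathbb R^N$). *)

(* Points of R^N are row vectors 'rV[R]_N over a real closed
   field R (the reals being the motivating instance). *)
From HB Require Import structures.
From mathcomp Require Import all_boot all_order all_algebra.
Set Implicit Arguments. Unset Strict Implicit. Unset Printing Implicit Defensive.
Import Order.TTheory GRing.Theory Num.Theory.
Local Open Scope ring_scope.

Section Geometry.
Variables (R : rcfType) (N : nat).
Local Notation pt := 'rV[R]_N.

Definition dotv (u v : pt) : R := \sum_(i < N) u 0 i * v 0 i.
Definition norm2 (u : pt) : R := dotv u u.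

Definition collinear (X Y Z : pt) : Prop := (\rank (col_mx (Y - X) (Z - X)) <= 1)%N.

Definition planar4 (A B C D : pt) : Prop :=
  (\rank (col_mx (B - A) (col_mx (C - A) (D - A))) <= 2)%N.

Definition parallel (u v : pt) : Prop := (\rank (col_mx u v) <= 1)%N.

Definition nondeg_quad (A B C D : pt) : Prop :=
  [/\ [/\ A <> B, A <> C, A <> D & [/\ B <> C, B <> D & C <> D]],
      [/\ ~ (collinear A B C), ~ (collinear A B D), ~ (collinear A C D)
        & ~ (collinear B C D)] &
      (exists P : pt, exists s t : R,
        [/\ P = A + s *: (C - A), P = B + t *: (D - B)
          & [/\ P <> A, P <> B, P <> C & P <> D]])].

Definition good_quad (A B C D : pt) : Prop := planar4 A B C D /\ nondeg_quad A B C D.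

Definition dual_quads (A B C D As Bs Cs Ds : pt) : Prop :=
  [/\ parallel (Bs - As) (B - A), parallel (Cs - Bs) (C - B),
      parallel (Ds - Cs) (D - C), parallel (As - Ds) (A - D)
    & [/\ parallel (Cs - As) (D - B) & parallel (Ds - Bs) (C - A)]].

Definition concircular (A B C D : pt) : Prop :=
  planar4 A B C D /\
  exists c : pt, [/\ norm2 (B - c) = norm2 (A - c), norm2 (C - c) = norm2 (A - c)
                   & norm2 (D - c) = norm2 (A - c)].

(* Cross-ratio q(a,b,c,d) = (a-b)(b-c)^{-1}(c-d)(d-a)^{-1} computed in the
   Clifford algebra of R^N, where v^{-1} = v / |v|^2.  For concircular points
   this Clifford number is real, i.e. equal to its scalar part; the scalar part
   of the Clifford product x y z w of four vectors is
   (x.y)(z.w) - (x.z)(y.w) + (x.w)(y.z). *)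
Definition clifford_scalar4 (x y z w : pt) : R :=
  dotv x y * dotv z w - dotv x z * dotv y w + dotv x w * dotv y z.

Definition cross_ratio (a b c d : pt) : R :=
  clifford_scalar4 (a - b) (b - c) (c - d) (d - a) / (norm2 (b - c) * norm2 (d - a)).

(* Nets on Z^2: f a b = f(u) with u = (a,b); f_1 = f (a+1) b, f_2 = f a (b+1). *)
Definition elem_quad (P : pt -> pt -> pt -> pt -> Prop) (f : int -> int -> pt)
  (a b : int) : Prop := P (f a b) (f (a + 1) b) (f (a + 1) (b + 1)) (f a (b + 1)).

Definition Qnet (f : int -> int -> pt) : Prop := forall a b, elem_quad good_quad f a b.

Definition koenigs_net (f : int -> int -> pt) : Prop :=
  Qnet f /\ exists fs : int -> int -> pt, Qnet fs /\
    forall a b, dual_quads (f a b) (f (a + 1) b) (f (a + 1) (b + 1)) (f a (b + 1))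
                           (fs a b) (fs (a + 1) b) (fs (a + 1) (b + 1)) (fs a (b + 1)).

Definition circular_net (f : int -> int -> pt) : Prop :=
  Qnet f /\ forall a b, elem_quad concircular f a b.

Definition isothermic_net (f : int -> int -> pt) : Prop :=
  circular_net f /\ koenigs_net f.

Definition qnet (f : int -> int -> pt) (a b : int) : R :=
  cross_ratio (f a b) (f (a + 1) b) (f (a + 1) (b + 1)) (f a (b + 1)).

End Geometry.

From HB Require Import structures.
From mathcomp Require Import all_boot all_order all_algebra.
From mathcomp Require Import ring zify.
From Stdlib Require Import ClassicalEpsilon.
Import Order.TTheory GRing.Theory Num.Theory.
Local Open Scope ring_scope.
Set Implicit Arguments. Unset Strict Implicit. Unset Printing Implicit Defensive.

(* Parametrize each elementary quadrilateral (A, B, C, D) by its diagonals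
   u = C - A, w = D - B, meeting at A + s u = B + t w.  For a circular quad the
   power of this point gives s (1 - s) |u|^2 = t (1 - t) |w|^2, and with it the
   cross-ratio becomes a ratio of two squared edge lengths times a function of
   s or t.  In q q_{-1,-2} = q_{-1} q_{-2} the four edge lengths at the common
   vertex cancel, so the relation is equivalent to the vertex condition
   t (1 - s_{-1}) (1 - t_{-1,-2}) s_{-2} = (1 - t) s_{-1} t_{-1,-2} (1 - s_{-2}).
   A dual net is given by scale factors on the edges, f*_1 - f* = m (f_1 - f);
   parallelism of the dual diagonals fixes the ratios of the four factors around
   a quadrilateral in terms of s and t.  The vertex condition is exactly the
   consistency of these ratios around a vertex, so it is necessary, and when it
   holds the factors, and then f*, can be constructed by discrete integration. *)

Ltac vec_ring := apply/rowP => i; rewrite !mxE; ring.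
Ltac vec_field := apply/rowP => i; rewrite !mxE; field.

Section Vectors.
Variables (R : rcfType) (N : nat).
Local Notation pt := 'rV[R]_N.

Lemma dotvDl (x y z : pt) : dotv (x + y) z = dotv x z + dotv y z.
Proof. by rewrite /dotv -big_split; apply: eq_bigr => i _; rewrite mxE mulrDl. Qed.

Lemma dotvC (x y : pt) : dotv x y = dotv y x.
Proof. by apply: eq_bigr => i _; rewrite mulrC. Qed.

Lemma dotvDr (x y z : pt) : dotv z (x + y) = dotv z x + dotv z y.
Proof. by rewrite dotvC dotvDl !(dotvC z). Qed.

Lemma dotvZl a (x y : pt) : dotv (a *: x) y = a * dotv x y.
Proof. by rewrite /dotv mulr_sumr; apply: eq_bigr => i _; rewrite mxE mulrA. Qed.

Lemma dotvZr a (x y : pt) : dotv y (a *: x) = a * dotv y x.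
Proof. by rewrite dotvC dotvZl dotvC. Qed.

Lemma norm2_gt0 (x : pt) : x != 0 -> 0 < norm2 x.
Proof.
move=> x0; have [i xi0] : exists i, x 0 i != 0.
  apply/existsP; apply: contraR x0; rewrite negb_exists => /forallP x0.
  by apply/eqP/rowP => i; rewrite mxE; apply/eqP/negbNE.
rewrite /norm2 /dotv (bigD1 i) //= ltr_pwDl //.
  by rewrite lt0r mulf_neq0 // -expr2 sqr_ge0.
by apply: sumr_ge0 => j _; rewrite -expr2 sqr_ge0.
Qed.

Lemma norm2_neq0 (x : pt) : x != 0 -> norm2 x != 0.
Proof. by move/norm2_gt0; rewrite lt0r => /andP[]. Qed.

Lemma norm2_subC (x y : pt) : norm2 (x - y) = norm2 (y - x).
Proof. by rewrite -opprB /norm2 -scaleN1r dotvZl dotvZr mulrA mulrNN !mul1r. Qed.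

Definition comb (u w : pt) (a b : R) : pt := a *: u + b *: w.

Lemma dotv_comb u w a1 b1 a2 b2 :
  dotv (comb u w a1 b1) (comb u w a2 b2) =
  a1 * a2 * dotv u u + (a1 * b2 + b1 * a2) * dotv u w + b1 * b2 * dotv w w.
Proof. by rewrite /comb !dotvDl !dotvDr !dotvZl !dotvZr (dotvC w u); ring. Qed.

Lemma norm2_add_comb (v u w : pt) a b :
  norm2 (v + comb u w a b) = norm2 v + 2 * a * dotv v u + 2 * b * dotv v w
    + (a * a * dotv u u + (a * b + b * a) * dotv u w + b * b * dotv w w).
Proof.
rewrite /norm2 /comb !dotvDl !dotvDr !dotvZl !dotvZr (dotvC u v) (dotvC w v) (dotvC w u).
ring.
Qed.

Lemma combB (u w : pt) a b c d :
  comb u w a b - comb u w c d = comb u w (a - c) (b - d).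
Proof. by rewrite /comb; vec_ring. Qed.

Lemma comb_sub_span (u w : pt) a b : (comb u w a b <= col_mx u w)%MS.
Proof. by rewrite -addsmxE addmx_sub // scalemx_sub // ?addsmxSl ?addsmxSr. Qed.

Lemma scale_parallel (x y : pt) a : x = a *: y -> parallel x y.
Proof.
move=> ->; apply: leq_trans (mxrankS _) (rank_leq_row y).
by rewrite col_mx_sub submx_refl andbT scalemx_sub.
Qed.

Lemma parallelx0 (x : pt) : parallel x 0.
Proof.
apply: leq_trans (mxrankS _) (rank_leq_row x).
by rewrite col_mx_sub submx_refl sub0mx.
Qed.

Lemma parallel_scale (x y : pt) : parallel x y -> y != 0 -> exists a, x = a *: y.
Proof.
move=> xy y0; have ry : \rank y = 1%N by rewrite rank_rV y0.
have sub_y : (y <= col_mx x y)%MS by rewrite -addsmxE addsmxSr.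
have : (col_mx x y <= y)%MS.
  have := mxrank_leqif_sup sub_y; rewrite ry => -[le_y <-].
  by rewrite eqn_leq le_y xy.
by rewrite col_mx_sub => /andP[/sub_rVP].
Qed.

Definition indep (u w : pt) := forall a b, a *: u + b *: w = 0 -> a = 0 /\ b = 0.

Lemma nparallel_indep (x y : pt) : ~ parallel x y -> indep x y.
Proof.
move=> xy a b Hab; have [a0|a0] := eqVneq a 0.
  move/eqP: Hab; rewrite a0 scale0r add0r scaler_eq0 => /orP[/eqP //|/eqP y0].
  by case: xy; rewrite y0; apply: parallelx0.
case: xy; apply: (@scale_parallel _ _ (- b / a)).
have ax : a *: x = - (b *: y) by apply/eqP; rewrite -addr_eq0 Hab.
by rewrite -[x](scalerK a0) ax scalerN scalerA -scaleNr mulrC mulNr.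
Qed.

Lemma comb_neq0 u w a b : indep u w -> (a != 0) || (b != 0) -> comb u w a b != 0.
Proof. by move=> uw ab; apply/eqP => /uw[a0 b0]; rewrite a0 b0 eqxx in ab. Qed.

Lemma indep_neq0l (u w : pt) : indep u w -> u != 0.
Proof.
by move=> uw; have := @comb_neq0 u w 1 0 uw; rewrite oner_neq0 /comb scale0r addr0 scale1r; apply.
Qed.

Lemma indep_neq0r (u w : pt) : indep u w -> w != 0.
Proof.
by move=> uw; have := @comb_neq0 u w 0 1 uw; rewrite oner_neq0 orbT /comb scale0r add0r scale1r; apply.
Qed.

Lemma nparallel_comb (u w : pt) a b c d : indep u w -> a * d - b * c != 0 ->
  ~ parallel (comb u w a b) (comb u w c d).
Proof.
move=> uw det0 xy.
have [cd0|cd0] := eqVneq (comb u w c d) 0.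
  by have [c0 d0] := uw c d cd0; rewrite c0 d0 !mulr0 subrr eqxx in det0.
have [k Hk] := parallel_scale xy cd0.
have [/subr0_eq ac /subr0_eq bd] : a - k * c = 0 /\ b - k * d = 0.
  apply: uw; transitivity (comb u w a b - k *: comb u w c d).
    by rewrite /comb; vec_ring.
  by rewrite -Hk subrr.
by move: det0; rewrite ac bd => /eqP; apply; ring.
Qed.

Lemma noncollinear_neq (X Y Z : pt) : ~ collinear X Y Z -> [/\ X <> Y, X <> Z & Y <> Z].
Proof.
rewrite /collinear -/(parallel _ _) => XYZ; split=> E; apply: XYZ; rewrite E.
- by apply: (@scale_parallel _ _ 0); rewrite subrr scale0r.
- by rewrite subrr; apply: parallelx0.
- by apply: (@scale_parallel _ _ 1); rewrite scale1r.
Qed.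

End Vectors.

Section Quadrilaterals.
Variables (R : rcfType) (N : nat).
Local Notation pt := 'rV[R]_N.

(* [u = C - A] and [w = D - B] are the diagonals, which meet at
   [A + s *: u = B + t *: w]. *)
Definition diag_param (A B C D u w : pt) (s t : R) :=
  [/\ indep u w, C = A + u, B = A + s *: u - t *: w, D = A + s *: u + (1 - t) *: w
    & [/\ s != 0, s != 1, t != 0 & t != 1]].

Lemma good_quad_diag_param A B C D :
  good_quad A B C D -> exists u w s t, diag_param A B C D u w s t.
Proof.
case=> _ [[AB AC AD [BC BD CD]] [nABC _ _ _] [P [s [t [PAC PBD [PA PB PC PD]]]]]].
exists (C - A), (D - B), s, t.
have eB : B = A + s *: (C - A) - t *: (D - B) by rewrite -PAC PBD; vec_ring.
split=> //.
- move=> a b Hab; have uv := nparallel_indep nABC.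
  have := uv b (- (b * s + t * a)).
  have -> : b *: (B - A) + - (b * s + t * a) *: (C - A)
            = - t *: (a *: (C - A) + b *: (D - B)) by rewrite {1}eB; vec_ring.
  rewrite Hab scaler0 => /(_ erefl) [b0 _].
  move/eqP: Hab; rewrite b0 scale0r addr0 scaler_eq0 subr_eq0 => /orP[/eqP //|/eqP CA].
  by case: AC.
- by vec_ring.
- by rewrite -[D](subrK B) {2}eB; vec_ring.
- split; apply/eqP => E.
  + by apply: PA; rewrite PAC E scale0r addr0.
  + by apply: PC; rewrite PAC E scale1r; vec_ring.
  + by apply: PB; rewrite PBD E scale0r addr0.
  + by apply: PD; rewrite PBD E scale1r; vec_ring.
Qed.

Lemma diag_param_edges_neq0 A B C D u w s t : diag_param A B C D u w s t ->
  [/\ B - A != 0, C - B != 0, D - C != 0 & D - A != 0].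
Proof.
case=> uw -> -> -> [s0 s1 t0 t1].
have s1' : 1 - s != 0 by rewrite subr_eq0 eq_sym.
have t1' : 1 - t != 0 by rewrite subr_eq0 eq_sym.
split.
- have -> : A + s *: u - t *: w - A = comb u w s (- t) by rewrite /comb; vec_ring.
  by rewrite comb_neq0 ?s0.
- have -> : A + u - (A + s *: u - t *: w) = comb u w (1 - s) t by rewrite /comb; vec_ring.
  by rewrite comb_neq0 ?s1'.
- have -> : A + s *: u + (1 - t) *: w - (A + u) = comb u w (s - 1) (1 - t).
    by rewrite /comb; vec_ring.
  by rewrite comb_neq0 ?t1' ?orbT.
- have -> : A + s *: u + (1 - t) *: w - A = comb u w s (1 - t) by rewrite /comb; vec_ring.
  by rewrite comb_neq0 ?s0.
Qed.

(* The power of the intersection point of the diagonals with respect to the circle. *)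
Lemma concircular_diag_power A B C D u w s t :
  diag_param A B C D u w s t -> concircular A B C D ->
  s * (1 - s) * norm2 u = t * (1 - t) * norm2 w.
Proof.
case=> _ -> -> -> _ [_ [c [eB eC eD]]].
pose g a b := norm2 (A - c + comb u w a b) - norm2 (A - c).
have g0 a b (X : pt) :
    norm2 (X - c) = norm2 (A - c) -> X - c = A - c + comb u w a b -> g a b = 0.
  by move=> eX dX; rewrite /g -dX eX subrr.
have gB : g s (- t) = 0 by apply: (g0 _ _ _ eB); rewrite /comb; vec_ring.
have gC : g 1 0 = 0 by apply: (g0 _ _ _ eC); rewrite /comb; vec_ring.
have gD : g s (1 - t) = 0 by apply: (g0 _ _ _ eD); rewrite /comb; vec_ring.
apply/eqP; rewrite eq_sym -subr_eq0 /norm2; apply/eqP.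
transitivity ((1 - t) * g s (- t) + t * g s (1 - t) - s * g 1 0).
  by rewrite /g !norm2_add_comb; ring.
by rewrite gB gC gD; ring.
Qed.

Lemma cross_ratio_diag_param A B C D u w s t :
  diag_param A B C D u w s t -> concircular A B C D ->
  let q := cross_ratio A B C D in
  [/\ q * t * norm2 (D - A) = (t - 1) * norm2 (B - A),
      q * (t - 1) * norm2 (C - B) = t * norm2 (C - D),
      q * (- s) * norm2 (B - C) = (1 - s) * norm2 (B - A)
    & q * (s - 1) * norm2 (D - A) = s * norm2 (D - C)].
Proof.
move=> P circ; have := concircular_diag_power P circ; rewrite /norm2 => power.
case: P circ => uw -> -> -> [s0 s1 t0 t1] _.
have s1' : 1 - s != 0 by rewrite subr_eq0 eq_sym.
have normu : dotv u u = t * (1 - t) * dotv w w / (s * (1 - s)).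
  by rewrite -power; field; rewrite s0 s1'.
have dAB : A - (A + s *: u - t *: w) = comb u w (- s) t by rewrite /comb; vec_ring.
have dBC : A + s *: u - t *: w - (A + u) = comb u w (s - 1) (- t) by rewrite /comb; vec_ring.
have dCD : A + u - (A + s *: u + (1 - t) *: w) = comb u w (1 - s) (t - 1).
  by rewrite /comb; vec_ring.
have dDA : A + s *: u + (1 - t) *: w - A = comb u w s (1 - t) by rewrite /comb; vec_ring.
have dBA : A + s *: u - t *: w - A = comb u w s (- t) by rewrite /comb; vec_ring.
have dCB : A + u - (A + s *: u - t *: w) = comb u w (1 - s) t by rewrite /comb; vec_ring.
have dDC : A + s *: u + (1 - t) *: w - (A + u) = comb u w (s - 1) (1 - t).
  by rewrite /comb; vec_ring.
rewrite /cross_ratio /clifford_scalar4 /norm2 dAB dBC dCD dDA dBA dCB dDC.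
have nBC : dotv (comb u w (s - 1) (- t)) (comb u w (s - 1) (- t)) != 0.
  by rewrite norm2_neq0 // comb_neq0 // subr_eq0 s1.
have nDA : dotv (comb u w s (1 - t)) (comb u w s (1 - t)) != 0.
  by rewrite norm2_neq0 // comb_neq0 // s0.
move: nBC nDA; rewrite !dotv_comb => nBC nDA; rewrite normu.
split; field; rewrite s1' s0 /=; apply/andP; split.
(* the side conditions are [B - C != 0] and [D - A != 0] with [norm2 u] eliminated *)
1,3,5,7: apply: contra_neq nDA => H; apply: (mulIf s1').
all: try (apply: contra_neq nBC => H; apply: (mulIf (mulf_neq0 s0 s1'))).
all: move: H; rewrite -power => H; rewrite mul0r -H; ring.
Qed.

Lemma dual_edge_ratios (A B C D u w As Bs Cs Ds : pt) (s t l1 l2 l3 l4 : R) :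
  diag_param A B C D u w s t ->
  Bs - As = l1 *: (B - A) -> Cs - Bs = l2 *: (C - B) ->
  Cs - Ds = l3 *: (C - D) -> Ds - As = l4 *: (D - A) ->
  parallel (Cs - As) (D - B) -> parallel (Ds - Bs) (C - A) ->
  [/\ l1 * s + l2 * (1 - s) = 0, l2 * t + l3 * (1 - t) = 0,
      l3 * (1 - s) + l4 * s = 0 & l1 * t + l4 * (1 - t) = 0].
Proof.
case=> uw eC eB eD _ E1 E2 E3 E4 P1 P2.
have eDB : D - B = w by rewrite eB eD; vec_ring.
have eCA : C - A = u by rewrite eC; vec_ring.
have [k1 Hk1] : exists k : R, Cs - As = k *: (D - B).
  by apply: (parallel_scale P1); rewrite eDB (indep_neq0r uw).
have [k2 Hk2] : exists k : R, Ds - Bs = k *: (C - A).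
  by apply: (parallel_scale P2); rewrite eCA (indep_neq0l uw).
have R1 : (l1 * s + l2 * (1 - s)) *: u + (l2 * t - l1 * t - k1) *: w = 0.
  transitivity (l2 *: (C - B) + l1 *: (B - A) - k1 *: (D - B)).
    by rewrite eB eC eD; vec_ring.
  by rewrite -E2 -E1 -Hk1; vec_ring.
have R2 : (l2 * (1 - s) - l3 * (1 - s) - k2) *: u + (l2 * t + l3 * (1 - t)) *: w = 0.
  transitivity (l2 *: (C - B) - l3 *: (C - D) - k2 *: (C - A)).
    by rewrite eB eC eD; vec_ring.
  by rewrite -E2 -E3 -Hk2; vec_ring.
have R3 : (l3 * (1 - s) + l4 * s) *: u + (- l3 * (1 - t) + l4 * (1 - t) - k1) *: w = 0.
  transitivity (l3 *: (C - D) + l4 *: (D - A) - k1 *: (D - B)).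
    by rewrite eB eC eD; vec_ring.
  by rewrite -E3 -E4 -Hk1; vec_ring.
have R4 : (l4 * s - l1 * s - k2) *: u + (l1 * t + l4 * (1 - t)) *: w = 0.
  transitivity (l4 *: (D - A) - l1 *: (B - A) - k2 *: (C - A)).
    by rewrite eB eC eD; vec_ring.
  by rewrite -E4 -E1 -Hk2; vec_ring.
by split; [exact: (uw _ _ R1).1 | exact: (uw _ _ R2).2 | exact: (uw _ _ R3).1
          | exact: (uw _ _ R4).2].
Qed.

Lemma diagonals_meet_inside (A B C D : pt) sg tu :
  A <> C -> B <> D -> A + sg *: (C - A) = B + tu *: (D - B) ->
  [/\ sg != 0, sg != 1, tu != 0 & tu != 1] ->
  exists P s t, [/\ P = A + s *: (C - A), P = B + t *: (D - B)
                  & [/\ P <> A, P <> B, P <> C & P <> D]].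
Proof.
move=> AC BD PAC_BD [sg0 sg1 tu0 tu1].
have CA0 : C - A != 0 by rewrite subr_eq0 eq_sym; apply/eqP.
have DB0 : D - B != 0 by rewrite subr_eq0 eq_sym; apply/eqP.
exists (A + sg *: (C - A)), sg, tu; split=> //; split=> E.
- have : sg *: (C - A) = 0 by rewrite -[LHS](addKr A) E addNr.
  by move/eqP; rewrite scaler_eq0 (negbTE sg0) (negbTE CA0).
- have : tu *: (D - B) = 0 by rewrite -[LHS](addKr B) -PAC_BD E addNr.
  by move/eqP; rewrite scaler_eq0 (negbTE tu0) (negbTE DB0).
- have : (sg - 1) *: (C - A) = 0 by rewrite -[RHS](subrr C) -{2}E; vec_ring.
  by move/eqP; rewrite scaler_eq0 subr_eq0 (negbTE sg1) (negbTE CA0).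
- have : (tu - 1) *: (D - B) = 0 by rewrite -[RHS](subrr D) -{2}E PAC_BD; vec_ring.
  by move/eqP; rewrite scaler_eq0 subr_eq0 (negbTE tu1) (negbTE DB0).
Qed.

Lemma good_quad_coords (A B C D u w : pt) x1 y1 x2 y2 x3 y3 sg tu :
  indep u w -> B - A = comb u w x1 y1 -> C - A = comb u w x2 y2 -> D - A = comb u w x3 y3 ->
  x1 * y2 - y1 * x2 != 0 -> x1 * y3 - y1 * x3 != 0 -> x2 * y3 - y2 * x3 != 0 ->
  (x2 - x1) * (y3 - y1) - (y2 - y1) * (x3 - x1) != 0 ->
  sg * x2 = x1 + tu * (x3 - x1) -> sg * y2 = y1 + tu * (y3 - y1) ->
  [/\ sg != 0, sg != 1, tu != 0 & tu != 1] ->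
  good_quad A B C D.
Proof.
move=> uw eB eC eD d12 d13 d23 d123 hx hy sgtu.
have eCB : C - B = comb u w (x2 - x1) (y2 - y1) by rewrite -combB -eB -eC; vec_ring.
have eDB : D - B = comb u w (x3 - x1) (y3 - y1) by rewrite -combB -eB -eD; vec_ring.
have nABC : ~ collinear A B C by rewrite /collinear -/(parallel _ _) eB eC; apply: nparallel_comb.
have nABD : ~ collinear A B D by rewrite /collinear -/(parallel _ _) eB eD; apply: nparallel_comb.
have nACD : ~ collinear A C D by rewrite /collinear -/(parallel _ _) eC eD; apply: nparallel_comb.
have nBCD : ~ collinear B C D by rewrite /collinear -/(parallel _ _) eCB eDB; apply: nparallel_comb.
have [AB AC BC] := noncollinear_neq nABC.
have [_ AD BD] := noncollinear_neq nABD.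
have [_ _ CD] := noncollinear_neq nBCD.
split.
  rewrite /planar4 eB eC eD; apply: leq_trans (mxrankS _) (rank_leq_row (col_mx u w)).
  by rewrite !col_mx_sub !comb_sub_span.
split=> //.
have PAC_BD : A + sg *: (C - A) = B + tu *: (D - B).
  rewrite -[B](subrK A) -[D](subrK A) eB eD eC.
  transitivity (A + comb u w (sg * x2) (sg * y2)); first by rewrite /comb; vec_ring.
  by rewrite hx hy /comb; vec_ring.
exact: diagonals_meet_inside PAC_BD sgtu.
Qed.

Section DualQuad.
Variables (A B C D u w As Bs Cs Ds : pt) (s t m : R).
Hypotheses (P : diag_param A B C D u w s t) (m0 : m != 0).
Hypotheses (E1 : Bs - As = m *: (B - A))
           (E2 : Cs - Bs = (- m * s / (1 - s)) *: (C - B))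
           (E3 : Cs - Ds = (m * s * t / ((1 - s) * (1 - t))) *: (C - D))
           (E4 : Ds - As = (- m * t / (1 - t)) *: (D - A)).

Lemma dual_quad_coords :
  [/\ Bs - As = comb u w (m * s) (- (m * t)),
      Cs - As = comb u w 0 (- (m * t) / (1 - s))
    & Ds - As = comb u w (- (m * s * t) / (1 - t)) (- (m * t))].
Proof.
case: P => _ eC eB eD [s0 s1 t0 t1].
have s1' : 1 - s != 0 by rewrite subr_eq0 eq_sym.
have t1' : 1 - t != 0 by rewrite subr_eq0 eq_sym.
split; first by rewrite E1 eB /comb; vec_ring.
  transitivity ((Cs - Bs) + (Bs - As)); first by vec_ring.
  by rewrite E1 E2 eB eC /comb; vec_field; rewrite ?s1' ?t1'.
by rewrite E4 eD /comb; vec_field; rewrite ?s1' ?t1'.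
Qed.

Lemma dual_quad_good : good_quad As Bs Cs Ds.
Proof.
have [eBs eCs eDs] := dual_quad_coords.
case: P => uw _ _ _ [s0 s1 t0 t1].
have s1' : 1 - s != 0 by rewrite subr_eq0 eq_sym.
have t1' : 1 - t != 0 by rewrite subr_eq0 eq_sym.
apply: (good_quad_coords (sg := 1 - s) (tu := 1 - t) uw eBs eCs eDs).
- have -> : m * s * (- (m * t) / (1 - s)) - - (m * t) * 0 = - (m * m * s * t / (1 - s)).
    by field; rewrite ?s1' ?t1'.
  by rewrite oppr_eq0 !mulf_neq0 // invr_neq0.
- have -> : m * s * - (m * t) - - (m * t) * (- (m * s * t) / (1 - t))
            = - (m * m * s * t / (1 - t)) by field; rewrite ?s1' ?t1'.
  by rewrite oppr_eq0 !mulf_neq0 // invr_neq0.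
- have -> : 0 * - (m * t) - - (m * t) / (1 - s) * (- (m * s * t) / (1 - t))
            = - (m * m * s * t * t / ((1 - s) * (1 - t))) by field; rewrite ?s1' ?t1'.
  by rewrite oppr_eq0 !mulf_neq0 // invr_neq0 // mulf_neq0.
- have -> : (0 - m * s) * (- (m * t) - - (m * t))
            - (- (m * t) / (1 - s) - - (m * t)) * (- (m * s * t) / (1 - t) - m * s)
            = - (m * m * s * s * t / ((1 - s) * (1 - t))) by field; rewrite ?s1' ?t1'.
  by rewrite oppr_eq0 !mulf_neq0 // invr_neq0 // mulf_neq0.
- by field; rewrite ?s1' ?t1'.
- by field; rewrite ?s1' ?t1'.
- by split=> //; rewrite subr_eq addrC -subr_eq subrr eq_sym.
Qed.

Lemma dual_quad_dual : dual_quads A B C D As Bs Cs Ds.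
Proof.
have [eBs eCs eDs] := dual_quad_coords.
case: P => _ eC eB eD [s0 s1 t0 t1].
have s1' : 1 - s != 0 by rewrite subr_eq0 eq_sym.
have t1' : 1 - t != 0 by rewrite subr_eq0 eq_sym.
split; last split.
- exact: scale_parallel E1.
- exact: scale_parallel E2.
- apply: (@scale_parallel _ _ _ _ (m * s * t / ((1 - s) * (1 - t)))).
  by rewrite -[Ds - Cs]opprB E3 -scalerN opprB.
- apply: (@scale_parallel _ _ _ _ (- m * t / (1 - t))).
  by rewrite -[As - Ds]opprB E4 -scalerN opprB.
- apply: (@scale_parallel _ _ _ _ (- m * t / (1 - s))).
  by rewrite eCs eB eD /comb; vec_field; rewrite ?s1' ?t1'.
- apply: (@scale_parallel _ _ _ _ (- m * s / (1 - t))).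
  transitivity ((Ds - As) - (Bs - As)); first by vec_ring.
  by rewrite eDs eBs eC /comb; vec_field; rewrite ?s1' ?t1'.
Qed.

End DualQuad.

End Quadrilaterals.

Lemma int_ind_succ (P : int -> Prop) : P 0 -> (forall b, P b -> P (b + 1)) ->
  (forall b, P (b + 1) -> P b) -> forall b, P b.
Proof.
move=> P0 up down; elim/int_ind => // n Pn.
  by rewrite -addn1 PoszD; apply: up.
by apply: down; rewrite -addn1 PoszD opprD subrK.
Qed.

Lemma choice2 (T : Type) (P : int -> int -> T -> Prop) :
  (forall a b, exists x, P a b x) -> exists g, forall a b, P a b (g a b).
Proof.
move=> H; have [g Hg] := choice (fun ab => P ab.1 ab.2) (fun ab => H ab.1 ab.2).
by exists (fun a b => g (a, b)) => a b; exact: Hg (a, b).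
Qed.

Section Recursion.
Variable T : Type.

Lemma int_rec_exists (g g' : int -> T -> T) (x0 : T) :
  (forall a y, g a (g' a y) = y) ->
  exists F : int -> T, F 0 = x0 /\ forall a, F (a + 1) = g a (F a).
Proof.
move=> gK.
pose Fp := fix Fp (n : nat) := if n is n'.+1 then g n' (Fp n') else x0.
pose Fn := fix Fn (n : nat) := if n is n'.+1 then g' (Negz n) (Fn n') else g' (Negz 0) x0.
exists (fun a => match a with Posz n => Fp n | Negz n => Fn n end); split=> // -[n|[|n]].
- by rewrite (_ : Posz n + 1 = Posz n.+1) //; lia.
- by rewrite (_ : Negz 0 + 1 = Posz 0) /= ?gK //; lia.
- by rewrite (_ : Negz n.+1 + 1 = Negz n) /= ?gK //; lia.
Qed.

Lemma int2_rec_exists (gH gH' gV gV' : int -> int -> T -> T) (x0 : T) :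
  (forall a b y, gH a b (gH' a b y) = y) ->
  (forall a b y, gV a b (gV' a b y) = y) ->
  (forall a b y, gV' a b (gV a b y) = y) ->
  (forall a b x, gV (a + 1) b (gH a b x) = gH a (b + 1) (gV a b x)) ->
  exists F : int -> int -> T, F 0 0 = x0 /\ forall a b,
    F (a + 1) b = gH a b (F a b) /\ F a (b + 1) = gV a b (F a b).
Proof.
move=> gHK gVK gVK' flat.
have [h [h0 hS]] := @int_rec_exists (gH^~ 0) (gH'^~ 0) x0 (gHK^~ 0).
have [F FS] : exists F : int -> int -> T, forall a,
    F a 0 = h a /\ forall b, F a (b + 1) = gV a b (F a b).
  apply: (choice (fun a (Fa : int -> T) => Fa 0 = h a /\ forall b, Fa (b + 1) = gV a b (Fa b))) => a.
  exact: int_rec_exists (h a) (gVK a).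
exists F; split; first by rewrite (FS 0).1 h0.
move=> a b; split; last exact: (FS a).2.
elim/int_ind_succ: b => [|b IH|b IH].
- by rewrite !(FS _).1 hS.
- by rewrite !(FS _).2 IH flat.
- by rewrite -[F (a + 1) b](gVK' (a + 1) b) -(FS (a + 1)).2 IH (FS a).2 -flat gVK'.
Qed.

End Recursion.

Section VertexCondition.
Variable R : fieldType.

Definition vertex_cond (s t : int -> int -> R) (a b : int) :=
  t a b * (1 - s (a - 1) b) * (1 - t (a - 1) (b - 1)) * s a (b - 1) =
  (1 - t a b) * s (a - 1) b * t (a - 1) (b - 1) * (1 - s a (b - 1)).

Lemma cross_ratio_vertex_iff (q0 q1 q2 q3 n1 n2 m1 m2 s1 s3 t0 t2 : R) :
  n1 != 0 -> n2 != 0 -> m1 != 0 -> m2 != 0 ->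
  s1 != 0 -> s3 != 1 -> t0 != 0 -> t2 != 1 ->
  q0 * t0 * n2 = (t0 - 1) * n1 -> q1 * (- s1) * n2 = (1 - s1) * m1 ->
  q2 * (t2 - 1) * m2 = t2 * m1 -> q3 * (s3 - 1) * m2 = s3 * n1 ->
  q0 * q2 = q1 * q3 <->
  t0 * (1 - s1) * (1 - t2) * s3 = (1 - t0) * s1 * t2 * (1 - s3).
Proof.
move=> n10 n20 m10 m20 s10 s31 t00 t21 F0 F1 F2 F3.
have s31' : s3 - 1 != 0 by rewrite subr_eq0.
have t21' : t2 - 1 != 0 by rewrite subr_eq0.
have Hq0 : q0 = (t0 - 1) * n1 / (t0 * n2) by rewrite -F0; field; rewrite ?t00 ?n20.
have Hq1 : q1 = (1 - s1) * m1 / (- s1 * n2) by rewrite -F1; field; rewrite ?oppr_eq0 ?s10 ?n20.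
have Hq2 : q2 = t2 * m1 / ((t2 - 1) * m2) by rewrite -F2; field; rewrite ?t21' ?m20.
have Hq3 : q3 = s3 * n1 / ((s3 - 1) * m2) by rewrite -F3; field; rewrite ?s31' ?m20.
set K := n1 * m1 / (n2 * m2 * t0 * (t2 - 1) * s1 * (s3 - 1)).
have K0 : K != 0 by rewrite !mulf_neq0 // invr_neq0 // !mulf_neq0.
have E : q0 * q2 - q1 * q3
         = - K * (t0 * (1 - s1) * (1 - t2) * s3 - (1 - t0) * s1 * t2 * (1 - s3)).
  by rewrite Hq0 Hq1 Hq2 Hq3 /K; field; rewrite oppr_eq0 n20 m20 t00 t21' s10 s31'.
split=> H; apply/eqP; rewrite -subr_eq0.
- by move: E; rewrite H subrr => /esym/eqP; rewrite mulf_eq0 oppr_eq0 (negbTE K0).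
- by rewrite E H subrr mulr0.
Qed.

Lemma dual_multipliers_vertex (h v h' v' s1 s3 t0 t2 : R) :
  h * v * h' * v' != 0 ->
  h * t0 + v * (1 - t0) = 0 -> h' * s1 + v * (1 - s1) = 0 ->
  v' * t2 + h' * (1 - t2) = 0 -> h * (1 - s3) + v' * s3 = 0 ->
  t0 * (1 - s1) * (1 - t2) * s3 = (1 - t0) * s1 * t2 * (1 - s3).
Proof.
move=> hv0 D0 D1 D2 D3; apply: (mulIf hv0).
transitivity ((h * t0) * ((1 - s1) * v) * ((1 - t2) * h') * (s3 * v')); first by ring.
rewrite (_ : h * t0 = - (v * (1 - t0))); last by rewrite -[LHS]subr0 -D0; ring.
rewrite (_ : (1 - s1) * v = - (h' * s1)); last by rewrite -[LHS]subr0 -D1; ring.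
rewrite (_ : (1 - t2) * h' = - (v' * t2)); last by rewrite -[LHS]subr0 -D2; ring.
rewrite (_ : s3 * v' = - (h * (1 - s3))); last by rewrite -[LHS]subr0 -D3; ring.
ring.
Qed.

(* [mh a b] is to be the scale factor of the dual net on the edge from [(a, b)]
   to [(a + 1, b)]; the two ratios are the ones forced by [dual_edge_ratios]. *)
Lemma vertex_cond_multiplier (sf tf : int -> int -> R) :
  (forall a b, [/\ sf a b != 0, 1 - sf a b != 0, tf a b != 0 & 1 - tf a b != 0]) ->
  (forall a b, vertex_cond sf tf a b) ->
  exists mh : int -> int -> R, (forall a b, mh a b != 0) /\ forall a b,
    mh (a + 1) b = sf a b / (1 - sf a b) * ((1 - tf (a + 1) b) / tf (a + 1) b) * mh a b /\
    mh a (b + 1) = sf a b * tf a b / ((1 - sf a b) * (1 - tf a b)) * mh a b.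
Proof.
move=> nz vc.
pose rH a b := sf a b / (1 - sf a b) * ((1 - tf (a + 1) b) / tf (a + 1) b).
pose rV a b := sf a b * tf a b / ((1 - sf a b) * (1 - tf a b)).
have rH0 a b : rH a b != 0.
  have [s0 s1 _ _] := nz a b; have [_ _ t0 t1] := nz (a + 1) b.
  by rewrite !mulf_neq0 // invr_neq0.
have rV0 a b : rV a b != 0.
  by have [s0 s1 t0 t1] := nz a b; rewrite !mulf_neq0 // invr_neq0 // mulf_neq0.
have flat a b : rV (a + 1) b * rH a b = rH a (b + 1) * rV a b.
  have := vc (a + 1) (b + 1); rewrite /vertex_cond !addrK => vc11.
  have [s00 s01 t00 t01] := nz a b; have [s10 s11 t10 t11] := nz (a + 1) b.
  have [s20 s21 t20 t21] := nz a (b + 1); have [s30 s31 t30 t31] := nz (a + 1) (b + 1).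
  apply/eqP; rewrite -subr_eq0; apply/eqP.
  transitivity (sf a b / ((1 - sf a b) * (1 - sf (a + 1) b) * (1 - sf a (b + 1))
                          * tf (a + 1) (b + 1) * (1 - tf a b))
     * (tf (a + 1) (b + 1) * (1 - sf a (b + 1)) * (1 - tf a b) * sf (a + 1) b
        - (1 - tf (a + 1) (b + 1)) * sf a (b + 1) * tf a b * (1 - sf (a + 1) b))).
    by rewrite /rH /rV; field; rewrite t01 t30 s21 s11 s01 t10 t11.
  by rewrite vc11 subrr mulr0.
have flatx a b x : rV (a + 1) b * (rH a b * x) = rH a (b + 1) * (rV a b * x).
  by rewrite (mulrA (rV _ _)) (mulrA (rH _ _)) flat.
have [mh [mh00 Hmh]] := @int2_rec_exists R
  (fun a b x => rH a b * x) (fun a b x => (rH a b)^-1 * x)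
  (fun a b x => rV a b * x) (fun a b x => (rV a b)^-1 * x) 1
  (fun a b => mulVKf (rH0 a b)) (fun a b => mulVKf (rV0 a b)) (fun a b => mulKf (rV0 a b))
  flatx.
exists mh; split=> // a b; elim/int_ind_succ: a => [|a IH|a IH].
- elim/int_ind_succ: b => [|b IH|b IH]; first by rewrite mh00 oner_neq0.
    by rewrite (Hmh 0 b).2 mulf_neq0.
  by move: IH; rewrite (Hmh 0 b).2 mulf_eq0 negb_or => /andP[].
- by rewrite (Hmh a b).1 mulf_neq0.
- by move: IH; rewrite (Hmh a b).1 mulf_eq0 negb_or => /andP[].
Qed.

End VertexCondition.

Section Nets.
Variables (R : rcfType) (N : nat).
Local Notation pt := 'rV[R]_N.
Implicit Types (f : int -> int -> pt) (sf tf : int -> int -> R).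

Definition quad_param f a b s t := exists u w,
  diag_param (f a b) (f (a + 1) b) (f (a + 1) (b + 1)) (f a (b + 1)) u w s t.

Lemma Qnet_quad_params f : Qnet f ->
  exists sf tf, forall a b, quad_param f a b (sf a b) (tf a b).
Proof.
move=> Qf; have [st Hst] : exists st : int -> int -> R * R,
    forall a b, quad_param f a b (st a b).1 (st a b).2.
  apply: (@choice2 _ (fun a b (st : R * R) => quad_param f a b st.1 st.2)) => a b.
  have [u [w [s [t P]]]] := good_quad_diag_param (Qf a b).
  by exists (s, t), u, w.
by exists (fun a b => (st a b).1), (fun a b => (st a b).2).
Qed.

Lemma quad_param_neq0 f a b s t : quad_param f a b s t ->
  [/\ s != 0, 1 - s != 0, t != 0 & 1 - t != 0].
Proof. by case=> u [w [_ _ _ _ [s0 s1 t0 t1]]]; rewrite !subr_eq0 !(eq_sym 1). Qed.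

Lemma qnet_vertex_iff f sf tf :
  (forall a b, elem_quad (@concircular R N) f a b) ->
  (forall a b, quad_param f a b (sf a b) (tf a b)) ->
  forall a b, qnet f a b * qnet f (a - 1) (b - 1) = qnet f (a - 1) b * qnet f a (b - 1)
              <-> vertex_cond sf tf a b.
Proof.
move=> circ param a b.
have [u0 [w0 P0]] := param a b; have [u1 [w1 P1]] := param (a - 1) b.
have [u2 [w2 P2]] := param (a - 1) (b - 1); have [u3 [w3 P3]] := param a (b - 1).
have [F0 _ _ _] := cross_ratio_diag_param P0 (circ a b).
have [_ _ F1 _] := cross_ratio_diag_param P1 (circ (a - 1) b).
have [_ F2 _ _] := cross_ratio_diag_param P2 (circ (a - 1) (b - 1)).
have [_ _ _ F3] := cross_ratio_diag_param P3 (circ a (b - 1)).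
have [n1 _ _ n2] := diag_param_edges_neq0 P0.
have [m1 _ _ _] := diag_param_edges_neq0 P1.
have [_ _ _ m2] := diag_param_edges_neq0 P3.
case: P0 P1 P2 P3 => [_ _ _ _ [_ _ t00 _]] [_ _ _ _ [s10 _ _ _]].
move=> [_ _ _ _ [_ _ _ t21]] [_ _ _ _ [_ s31 _ _]].
move: F1 F2 F3 m1 m2; rewrite !subrK => F1 F2 F3 m1 m2.
rewrite (norm2_subC (f a b) (f a (b + 1))) in F1.
rewrite (norm2_subC (f a b) (f (a + 1) b)) in F3.
rewrite /qnet /vertex_cond !subrK.
exact: cross_ratio_vertex_iff (norm2_neq0 n1) (norm2_neq0 n2) (norm2_neq0 m1)
  (norm2_neq0 m2) s10 s31 t00 t21 F0 F1 F2 F3.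
Qed.

Lemma koenigs_vertex_cond f sf tf :
  (forall a b, quad_param f a b (sf a b) (tf a b)) ->
  koenigs_net f -> forall a b, vertex_cond sf tf a b.
Proof.
move=> param [_ [fs [Qfs dual]]].
have [mh Hmh] : exists mh : int -> int -> R,
    forall a b, fs (a + 1) b - fs a b = mh a b *: (f (a + 1) b - f a b).
  apply: (@choice2 _ (fun a b l => fs (a + 1) b - fs a b = l *: (f (a + 1) b - f a b))).
  move=> a b; have [u [w P]] := param a b; have [AB0 _ _ _] := diag_param_edges_neq0 P.
  by case: (dual a b) => par _ _ _ _; apply: (parallel_scale par).
have [mv Hmv] : exists mv : int -> int -> R,
    forall a b, fs a (b + 1) - fs a b = mv a b *: (f a (b + 1) - f a b).
  apply: (@choice2 _ (fun a b l => fs a (b + 1) - fs a b = l *: (f a (b + 1) - f a b))).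
  move=> a b; have [u [w P]] := param a b; have [_ _ _ DA0] := diag_param_edges_neq0 P.
  case: (dual a b) => _ _ _ par _.
  have [|l Hl] := parallel_scale par; first by rewrite -opprB oppr_eq0.
  by exists l; rewrite -opprB Hl -scalerN opprB.
have mh0 a b : mh a b != 0.
  apply/eqP => m0; case: (Qfs a b) => _ [[AB _ _ _] _ _]; apply: AB.
  by apply/esym/subr0_eq; rewrite Hmh m0 scale0r.
have mv0 a b : mv a b != 0.
  apply/eqP => m0; case: (Qfs a b) => _ [[_ _ AD _] _ _]; apply: AD.
  by apply/esym/subr0_eq; rewrite Hmv m0 scale0r.
have ratios a b : [/\ mh a b * sf a b + mv (a + 1) b * (1 - sf a b) = 0,
                      mv (a + 1) b * tf a b + mh a (b + 1) * (1 - tf a b) = 0,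
                      mh a (b + 1) * (1 - sf a b) + mv a b * sf a b = 0
                    & mh a b * tf a b + mv a b * (1 - tf a b) = 0].
  have [u [w P]] := param a b; case: (dual a b) => _ _ _ _ [dAC dBD].
  exact: dual_edge_ratios P (Hmh a b) (Hmv (a + 1) b) (Hmh a (b + 1)) (Hmv a b) dAC dBD.
move=> a b.
have [_ _ _ D0] := ratios a b.
have [D1 _ _ _] := ratios (a - 1) b.
have [_ D2 _ _] := ratios (a - 1) (b - 1).
have [_ _ D3 _] := ratios a (b - 1).
move: D1 D2 D3; rewrite !subrK => D1 D2 D3.
by apply: dual_multipliers_vertex D0 D1 D2 D3; rewrite !mulf_neq0.
Qed.

Lemma vertex_cond_koenigs f sf tf : Qnet f ->
  (forall a b, quad_param f a b (sf a b) (tf a b)) ->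
  (forall a b, vertex_cond sf tf a b) -> koenigs_net f.
Proof.
move=> Qf param vc; split=> //.
have nz a b := quad_param_neq0 (param a b).
have [mh [mh0 Hmh]] := vertex_cond_multiplier nz vc.
pose mv a b := - mh a b * tf a b / (1 - tf a b).
have mvS a b : mv (a + 1) b = - mh a b * sf a b / (1 - sf a b).
  have [_ s1 _ _] := nz a b; have [_ _ t0 t1] := nz (a + 1) b.
  by rewrite /mv (Hmh a b).1; field; rewrite s1 t0 t1.
have flat a b x :
    x + mh a b *: (f (a + 1) b - f a b) + mv (a + 1) b *: (f (a + 1) (b + 1) - f (a + 1) b)
    = x + mv a b *: (f a (b + 1) - f a b) + mh a (b + 1) *: (f (a + 1) (b + 1) - f a (b + 1)).
  have [_ s1 _ t1] := nz a b; have [u [w [_ eC eB eD _]]] := param a b.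
  by rewrite mvS (Hmh a b).2 /mv eC eB eD; vec_field; rewrite s1 t1.
have [fs [_ Hfs]] := @int2_rec_exists 'rV[R]_N
  (fun a b x => x + mh a b *: (f (a + 1) b - f a b))
  (fun a b x => x - mh a b *: (f (a + 1) b - f a b))
  (fun a b x => x + mv a b *: (f a (b + 1) - f a b))
  (fun a b x => x - mv a b *: (f a (b + 1) - f a b)) 0
  (fun a b => subrK _) (fun a b => subrK _) (fun a b => addrK _) flat.
have dH a b : fs (a + 1) b - fs a b = mh a b *: (f (a + 1) b - f a b).
  by rewrite (Hfs a b).1 addrC addKr.
have dV a b : fs a (b + 1) - fs a b = mv a b *: (f a (b + 1) - f a b).
  by rewrite (Hfs a b).2 addrC addKr.
have good_dual a b : elem_quad (@good_quad R N) fs a b /\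
    dual_quads (f a b) (f (a + 1) b) (f (a + 1) (b + 1)) (f a (b + 1))
               (fs a b) (fs (a + 1) b) (fs (a + 1) (b + 1)) (fs a (b + 1)).
  have [u [w P]] := param a b.
  have E2 : fs (a + 1) (b + 1) - fs (a + 1) b
           = (- mh a b * sf a b / (1 - sf a b)) *: (f (a + 1) (b + 1) - f (a + 1) b).
    by rewrite dV mvS.
  have E3 : fs (a + 1) (b + 1) - fs a (b + 1) = (mh a b * sf a b * tf a b
      / ((1 - sf a b) * (1 - tf a b))) *: (f (a + 1) (b + 1) - f a (b + 1)).
    by rewrite dH (Hmh a b).2 mulrC !mulrA.
  split; [exact: dual_quad_good P (mh0 a b) (dH a b) E2 (dV a b)
         | exact: dual_quad_dual P (dH a b) E2 E3 (dV a b)].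
by exists fs; split=> a b; [exact: (good_dual a b).1 | exact: (good_dual a b).2].
Qed.

End Nets.

Unset Implicit Arguments.

Theorem mainTheorem12 (R : rcfType) (N : nat) (f : int -> int -> 'rV[R]_N) :
  circular_net f ->
  (isothermic_net f <->
   forall a b : int,
     qnet f a b * qnet f (a - 1) (b - 1) = qnet f (a - 1) b * qnet f a (b - 1)).
Proof.
move=> circ; have [Qf concirc] := circ.
have [sf [tf param]] := Qnet_quad_params Qf.
have vertex := qnet_vertex_iff concirc param.
split=> [[_ koenigs] a b | qrel].
- by apply/vertex; exact: koenigs_vertex_cond param koenigs a b.
- by split=> //; apply: (vertex_cond_koenigs Qf param) => a b; apply/vertex.
Qed.
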